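(* Let $E$ be a finite-dimensional real affine space. An extended-real-valued function $h:E\to\overline{\mathbb{R}}$ is generalized affine if and only if one of the following holds: (a) $h(x)=+\infty$ for all $x\in E$; (b) $h(x)=-\infty$ for all $x\in E$; (c) $h$ is real-valued on all of $E$ and is an affine function; or (d) there is a hyperplane $H$ in $E$ such that $h(x)=+\infty$ for all points on one (open) side of $H$, $h(x)=-\infty$ for all points on the other side of $H$, and the restriction of $h$ to $H$ is a generalized affine function on $H$.
   Context: $\overline{\mathbb{R}}=\mathbb{R}\cup\{-\infty,+\infty\}$. A generalized affine function on an affine space is an extended-real-valued function that is both convex and concave in the sense of extended-real-valued convex analysis (convex: epigraph convex; concave: hypograph convex). *)

From HB Require Import structures.
From mathcomp Require Import all_boot all_order all_algebra.
From mathcomp Require Import all_classical all_reals ereal.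
Set Implicit Arguments. Unset Strict Implicit. Unset Printing Implicit Defensive.
Import Order.TTheory GRing.Theory Num.Theory.
Local Open Scope ring_scope.
Local Open Scope classical_set_scope.

(* The finite-dimensional real affine space E is modelled as R^n = 'rV[R]_n,
   with R : realType (any n-dimensional real affine space is affinely
   isomorphic to it). Extended reals are \bar R. *)

Section GenAffine.
Variables (R : realType) (n : nat).

Definition convex_set_prod (S : set ('rV[R]_n * R)) : Prop :=
  forall p q, S p -> S q -> forall t : R, 0 <= t <= 1 ->
    S ((1 - t) *: p.1 + t *: q.1, (1 - t) * p.2 + t * q.2).

Definition epi (A : set 'rV[R]_n) (h : 'rV[R]_n -> \bar R) :
  set ('rV[R]_n * R) := [set p | A p.1 /\ (h p.1 <= (p.2)%:E)%E].
Definition hypo (A : set 'rV[R]_n) (h : 'rV[R]_n -> \bar R) :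
  set ('rV[R]_n * R) := [set p | A p.1 /\ ((p.2)%:E <= h p.1)%E].

Definition convex_fun_on A h := convex_set_prod (epi A h).
Definition concave_fun_on A h := convex_set_prod (hypo A h).

Definition gen_affine_on (A : set 'rV[R]_n) (h : 'rV[R]_n -> \bar R) : Prop :=
  convex_fun_on A h /\ concave_fun_on A h.

Definition dotv (a x : 'rV[R]_n) : R := \sum_(i < n) a 0 i * x 0 i.

Definition hyperplane (a : 'rV[R]_n) (b : R) : set 'rV[R]_n :=
  [set x | dotv a x = b].
End GenAffine.

(* A generalized affine h is +oo on a convex set P = [h = +oo] whose
   complement, the effective domain of the convex function h, is convex as
   well.  Such a "hemispace" of R^n lies between an open half-space and its
   closure: by induction on n, either some line parallel to the first axis lies
   entirely in P (or entirely outside it), and those lines form a hemispace of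
   R^(n-1); or every such line enters P at a single height, which is an affine
   function of the other coordinates.  Below the hyperplane h must be -oo: if
   h x were finite there, reflecting a point y with h y = +oo through x gives a
   point 2x - y with h = -oo, and x lies strictly between 2x - y and a point
   where h < +oo, forcing h x = -oo.  If h never takes an infinite value it
   preserves convex combinations, hence is affine.  Negating h exchanges
   epigraph and hypograph, which halves all symmetric arguments. *)

From HB Require Import structures.
From mathcomp Require Import all_boot all_order all_algebra.
From mathcomp Require Import all_classical all_reals ereal.
From mathcomp Require Import ring lra.

Set Implicit Arguments.
Unset Strict Implicit.
Unset Printing Implicit Defensive.
Import Order.TTheory GRing.Theory Num.Theory.
Local Open Scope ring_scope.
Local Open Scope classical_set_scope.

Lemma conv_lt_small_weight (R : realFieldType) (A B b : R) :
  A < b -> exists2 mu : R, 0 < mu <= 1 & (1 - mu) * A + mu * B < b.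
Proof.
move=> Ab; have D0 : 0 < b - A by rewrite subr_gt0.
have C0 : 0 <= `|B - A| := normr_ge0 _.
have BA : B - A <= `|B - A| := ler_norm _.
have DC0 : 0 < b - A + `|B - A| by rewrite ltr_wpDr.
exists ((b - A) / (b - A + `|B - A|)).
  by rewrite divr_gt0 //= ler_pdivrMr // mul1r lerDl.
set mu := _ / _; have mu0 : 0 < mu by rewrite divr_gt0.
have muE : mu * (b - A + `|B - A|) = b - A by rewrite /mu mulfVK ?gt_eqF.
have : 0 <= mu * (`|B - A| - (B - A)) by rewrite mulr_ge0 ?subr_ge0 // ltW.
have : 0 < mu * (b - A) by rewrite mulr_gt0.
nra.
Qed.

Section RowConvexity.
Variables (R : realType) (n : nat).
Implicit Types (P : set 'rV[R]_n) (a x y : 'rV[R]_n) (t : R).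

Lemma dotvDr a x y : dotv a (x + y) = dotv a x + dotv a y.
Proof. by rewrite /dotv -big_split; apply: eq_bigr => i _; rewrite mxE mulrDr. Qed.

Lemma dotvZr a t x : dotv a (t *: x) = t * dotv a x.
Proof. by rewrite /dotv mulr_sumr; apply: eq_bigr => i _; rewrite mxE mulrCA. Qed.

Lemma dotvNl a x : dotv (- a) x = - dotv a x.
Proof. by rewrite /dotv -sumrN; apply: eq_bigr => i _; rewrite mxE mulNr. Qed.

Lemma dotv_combr a x y t :
  dotv a ((1 - t) *: x + t *: y) = (1 - t) * dotv a x + t * dotv a y.
Proof. by rewrite dotvDr !dotvZr. Qed.

Lemma hyperplaneN a b : hyperplane (- a) (- b) = hyperplane a b.
Proof.
by apply/seteqP; split => x; rewrite /hyperplane /= dotvNl; [move/oppr_inj | move->].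
Qed.

Definition convex_set P :=
  forall x y t, 0 <= t <= 1 -> P x -> P y -> P ((1 - t) *: x + t *: y).

Definition hemispace P := convex_set P /\ convex_set (~` P).

Definition between_halfspaces P := exists a b,
  [/\ a != 0, forall x, b < dotv a x -> P x & forall x, dotv a x < b -> ~ P x].

Lemma convex_hyperplane a b : convex_set (hyperplane a b).
Proof. by move=> x y t _ /= ax ay; rewrite /hyperplane /= dotv_combr ax ay; ring. Qed.

Lemma hemispaceC P : hemispace P -> hemispace (~` P).
Proof. by move=> [cP cCP]; rewrite /hemispace setCK. Qed.

Lemma between_halfspacesC P : between_halfspaces (~` P) -> between_halfspaces P.
Proof.
move=> [a [b [a0 above below]]]; exists (- a), (- b); split.
- by rewrite oppr_eq0.
- by move=> x; rewrite dotvNl ltrN2 => /below /contrapT.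
- by move=> x; rewrite dotvNl ltrN2 => /above.
Qed.

End RowConvexity.

Section AffineOnSegments.
Variables (R : realType) (n : nat).
Implicit Types (f g : 'rV[R]_n -> R) (x y : 'rV[R]_n) (t : R).

Definition affine_on_segments f :=
  forall x y t, 0 <= t <= 1 -> f ((1 - t) *: x + t *: y) = (1 - t) * f x + t * f y.

Section Linearity.
Variable f : 'rV[R]_n -> R.
Hypotheses (f_aff : affine_on_segments f) (f0 : f 0 = 0).

Lemma segment_scale01 x t : 0 <= t <= 1 -> f (t *: x) = t * f x.
Proof. by move=> t01; have := f_aff 0 x t01; rewrite scaler0 add0r f0 mulr0 add0r. Qed.

Lemma segment_additive x y : f (x + y) = f x + f y.
Proof.
have half01 : 0 <= (2^-1 : R) <= 1 by apply/andP; split; lra.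
have := f_aff x y half01.
have -> : (1 - 2^-1) *: x + 2^-1 *: y = 2^-1 *: (x + y).
  by apply/rowP => i; rewrite !mxE; lra.
rewrite segment_scale01 //; lra.
Qed.

Lemma segment_scale x t : f (t *: x) = t * f x.
Proof.
have scale_ge0 u : 0 <= u -> f (u *: x) = u * f x.
  move=> u0; have [u1|u1] := lerP u 1; first by rewrite segment_scale01 // u0.
  have u_gt0 : 0 < u := lt_trans ltr01 u1.
  have uV01 : 0 <= u^-1 <= 1 by rewrite invr_ge0 u0 invf_le1 // ltW.
  have := segment_scale01 (u *: x) uV01.
  rewrite scalerA mulVf ?gt_eqF // scale1r => ->.
  by rewrite mulrA mulfV ?gt_eqF ?mul1r.
have [t0|t0] := lerP 0 t; first exact: scale_ge0.
have fN z : f (- z) = - f z.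
  by apply/eqP; rewrite -addr_eq0 -segment_additive addNr f0.
by rewrite -[t]opprK scaleNr fN scale_ge0 ?mulNr // oppr_ge0 ltW.
Qed.

End Linearity.

Lemma affine_on_segments_dotv g :
  affine_on_segments g -> exists a, forall x, g x = dotv a x + g 0.
Proof.
move=> g_aff; pose f x := g x - g 0.
have f_aff : affine_on_segments f by move=> x y t t01; rewrite /f g_aff //; ring.
have f0 : f 0 = 0 by rewrite /f subrr.
exists (\row_i f 'e_i) => x.
rewrite -[g x](subrK (g 0)) -/(f x) {1}(row_sum_delta x).
rewrite (big_morph f (segment_additive f_aff f0) f0) /dotv.
congr (_ + _); apply: eq_bigr => i _.
by rewrite (segment_scale f_aff f0) mxE mulrC.
Qed.

End AffineOnSegments.

Section VerticalLines.
Variables (R : realType) (n : nat).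
Implicit Types (s t : R) (a z : 'rV[R]_n).

Definition lcons s z : 'rV[R]_(1 + n) := row_mx (\row_(i < 1) s) z.

Lemma lcons_comb s1 s2 z1 z2 t :
  (1 - t) *: lcons s1 z1 + t *: lcons s2 z2 =
  lcons ((1 - t) * s1 + t * s2) ((1 - t) *: z1 + t *: z2).
Proof.
rewrite /lcons !scale_row_mx add_row_mx; congr row_mx.
by apply/rowP => i; rewrite !mxE.
Qed.

Lemma lconsE (x : 'rV[R]_(1 + n)) : x = lcons (x 0 (lshift n 0)) (rsubmx x).
Proof.
rewrite -{1}(hsubmxK x) /lcons; congr row_mx.
by apply/rowP => i; rewrite !mxE ord1; congr (x _ _); apply: val_inj.
Qed.

Lemma dotv_lcons s s' a z : dotv (lcons s a) (lcons s' z) = s * s' + dotv a z.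
Proof.
rewrite /dotv big_split_ord /= big_ord1 /lcons !row_mxEl !mxE; congr (_ + _).
by apply: eq_bigr => i _; rewrite !row_mxEr.
Qed.

Lemma lcons_eq0 s a : (lcons s a == 0) = (s == 0) && (a == 0).
Proof.
rewrite /lcons row_mx_eq0; congr (_ && _).
apply/eqP/eqP => [/rowP/(_ 0)|->]; rewrite ?mxE //.
by apply/rowP => i; rewrite !mxE.
Qed.

Section FullLine.
Variable P : set 'rV[R]_(1 + n).
Hypothesis hemiP : hemispace P.

Definition full_lines := [set z | forall s, P (lcons s z)].

Lemma hemispace_full_lines : hemispace full_lines.
Proof.
have [cP cCP] := hemiP; split.
  move=> z1 z2 t t01 full1 full2 s.
  have -> : lcons s ((1 - t) *: z1 + t *: z2) =
      (1 - t) *: lcons s z1 + t *: lcons s z2.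
    by rewrite lcons_comb; congr lcons; ring.
  exact: cP.
move=> z1 z2 t t01 /existsNP[s1 nP1] /existsNP[s2 nP2] full.
by apply: (cCP _ _ t t01 nP1 nP2); rewrite lcons_comb.
Qed.

Hypothesis IH : forall Q : set 'rV[R]_n,
  hemispace Q -> Q !=set0 -> ~` Q !=set0 -> between_halfspaces Q.

Lemma between_halfspaces_full_line :
  ~` P !=set0 -> full_lines !=set0 -> between_halfspaces P.
Proof.
move=> [q nPq] [z0 full_z0].
have [a [b [a0 above below]]] : between_halfspaces full_lines.
  apply: IH; [exact: hemispace_full_lines | by exists z0 |].
  by exists (rsubmx q) => full_q; apply: nPq; rewrite (lconsE q).
exists (lcons 0 a), b; split.
- by rewrite lcons_eq0 eqxx.
- by move=> x; rewrite (lconsE x) dotv_lcons mul0r add0r => /above.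
move=> x; rewrite (lconsE x) dotv_lcons mul0r add0r.
set s := x 0 _; set z := rsubmx x => az Px.
(* moving (s, z) towards the full line through z0 reaches a full line below b *)
have [mu /andP[mu_gt0 mu_le1] az_mu] := conv_lt_small_weight (dotv a z0) az.
apply: (below ((1 - mu) *: z + mu *: z0)); first by rewrite dotv_combr.
move=> s'.
have -> : lcons s' ((1 - mu) *: z + mu *: z0) =
    (1 - mu) *: lcons s z + mu *: lcons ((s' - (1 - mu) * s) / mu) z0.
  by rewrite lcons_comb; congr lcons; field; rewrite gt_eqF.
by apply: (proj1 hemiP) => //; rewrite (ltW mu_gt0) mu_le1.
Qed.

End FullLine.

Section CrossingLines.
Variable P : set 'rV[R]_(1 + n).
Hypothesis hemiP : hemispace P.
Hypothesis lines_cross :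
  forall z, (exists s, P (lcons s z)) /\ (exists s, ~ P (lcons s z)).
Variables (z0 : 'rV[R]_n) (s0 s1 : R).
Hypotheses (s01 : s0 < s1) (nP0 : ~ P (lcons s0 z0)) (P1 : P (lcons s1 z0)).

Lemma lines_upward z s s' : s <= s' -> P (lcons s z) -> P (lcons s' z).
Proof.
move=> le_ss' Ps; apply: contrapT => nPs'.
have lt_ss' : s < s'.
  by rewrite lt_neqAle le_ss' andbT; apply/eqP => ss'; apply: nPs'; rewrite -ss'.
(* with this weight, the point of the segment from (s, z) to (s1, z0) is also
   on the segment from (s0, z0) to (s', z) *)
pose be := (s' - s) / (s' - s + (s1 - s0)).
have d_gt0 : 0 < s' - s by rewrite subr_gt0.
have d0_gt0 : 0 < s1 - s0 by rewrite subr_gt0.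
have D_gt0 : 0 < s' - s + (s1 - s0) := addr_gt0 d_gt0 d0_gt0.
have be_gt0 : 0 < be by rewrite /be divr_gt0.
have be_lt1 : be < 1 by rewrite /be ltr_pdivrMr // mul1r ltrDl.
have be01 : 0 <= be <= 1 by rewrite (ltW be_gt0) (ltW be_lt1).
have be'01 : 0 <= 1 - be <= 1.
  by rewrite subr_ge0 gerBl (ltW be_gt0) (ltW be_lt1).
have := proj2 hemiP _ _ _ be'01 nP0 nPs'; apply.
have := proj1 hemiP _ _ _ be01 Ps P1; rewrite !lcons_comb.
have -> : (1 - be) * s + be * s1 = (1 - (1 - be)) * s0 + (1 - be) * s'.
  by rewrite /be; field; rewrite gt_eqF.
by have -> : (1 - be) *: z + be *: z0 = (1 - (1 - be)) *: z0 + (1 - be) *: z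
  by rewrite addrC subKr.
Qed.

Definition threshold z := sup [set s | ~ P (lcons s z)].

Lemma has_sup_threshold z : has_sup [set s | ~ P (lcons s z)].
Proof.
have [[sp Psp] [sq nPsq]] := lines_cross z; split; first by exists sq.
exists sp => s nPs; rewrite leNgt; apply/negP => lt_sps; apply: nPs.
exact: lines_upward (ltW lt_sps) Psp.
Qed.

Lemma threshold_lt z s : threshold z < s -> P (lcons s z).
Proof.
move=> lt_s; apply: contrapT => nPs.
by have := sup_upper_bound (has_sup_threshold z) nPs; rewrite leNgt lt_s.
Qed.

Lemma lt_threshold z s : s < threshold z -> ~ P (lcons s z).
Proof.
move=> lt_s Ps; rewrite -subr_gt0 in lt_s.
have [e nPe] := sup_adherent lt_s (has_sup_threshold z).
rewrite opprB addrCA subrr addr0 => lt_se.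
by apply/nPe/(lines_upward (ltW lt_se)).
Qed.

Lemma threshold_affine : affine_on_segments threshold.
Proof.
move=> z1 z2 t t01; set z := _ + _; set c := _ + _.
apply/eqP; rewrite eq_le !leNgt; apply/andP; split; apply/negP => lt_c.
- pose e := (threshold z - c) / 2.
  have e_gt0 : 0 < e by rewrite divr_gt0 ?subr_gt0.
  have Pz1 : P (lcons (threshold z1 + e) z1) by apply: threshold_lt; rewrite ltrDl.
  have Pz2 : P (lcons (threshold z2 + e) z2) by apply: threshold_lt; rewrite ltrDl.
  have := proj1 hemiP _ _ _ t01 Pz1 Pz2; rewrite lcons_comb; apply: lt_threshold.
  have -> : (1 - t) * (threshold z1 + e) + t * (threshold z2 + e) = c + e.
    by rewrite /c; ring.
  rewrite /e; lra.
- pose e := (c - threshold z) / 2.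
  have e_gt0 : 0 < e by rewrite divr_gt0 ?subr_gt0.
  have nPz1 : ~ P (lcons (threshold z1 - e) z1).
    by apply: lt_threshold; rewrite gtrDl oppr_lt0.
  have nPz2 : ~ P (lcons (threshold z2 - e) z2).
    by apply: lt_threshold; rewrite gtrDl oppr_lt0.
  have := proj2 hemiP _ _ _ t01 nPz1 nPz2; rewrite /setC /= lcons_comb; apply.
  apply: threshold_lt.
  have -> : (1 - t) * (threshold z1 - e) + t * (threshold z2 - e) = c - e.
    by rewrite /c; ring.
  rewrite /e; lra.
Qed.

Lemma between_halfspaces_threshold : between_halfspaces P.
Proof.
have [c thrE] := affine_on_segments_dotv threshold_affine.
exists (lcons 1 (- c)), (threshold 0); split.
- by rewrite lcons_eq0 oner_eq0.
- move=> x; rewrite (lconsE x) dotv_lcons mul1r dotvNl => lt_x.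
  by apply: threshold_lt; rewrite thrE; lra.
- move=> x; rewrite (lconsE x) dotv_lcons mul1r dotvNl => lt_x.
  by apply: lt_threshold; rewrite thrE; lra.
Qed.

End CrossingLines.

End VerticalLines.

Theorem hemispace_between_halfspaces (R : realType) n (P : set 'rV[R]_n) :
  hemispace P -> P !=set0 -> ~` P !=set0 -> between_halfspaces P.
Proof.
elim: n P => [|n IH] P hemiP [p Pp] [q nPq].
  by case: nPq; rewrite (thinmx0 q) -(thinmx0 p).
have [full|nfull] := EM (full_lines P !=set0).
  by apply: between_halfspaces_full_line => //; exists q.
have [cfull|ncfull] := EM (full_lines (~` P) !=set0).
  apply/between_halfspacesC/between_halfspaces_full_line => //.
    exact: hemispaceC.
  by exists p; rewrite setCK.
have lines_cross z : (exists s, P (lcons s z)) /\ (exists s, ~ P (lcons s z)).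
  split; apply: contrapT => /forallNP no_s.
  - by apply: ncfull; exists z.
  - by apply: nfull; exists z => s; apply: contrapT; apply: no_s.
have [[sp Psp] [sq nPsq]] := lines_cross 0.
have [lt_qp|lt_pq|eq_pq] := ltgtP sq sp.
- exact: between_halfspaces_threshold hemiP lines_cross _ _ _ lt_qp nPsq Psp.
- have lines_crossC z :
      (exists s, (~` P) (lcons s z)) /\ (exists s, ~ (~` P) (lcons s z)).
    have [[s Ps] [s' nPs']] := lines_cross z.
    by split; [exists s' | exists s => /(_ Ps)].
  have nnP_sp : ~ (~` P) (lcons sp 0) by apply.
  apply/between_halfspacesC.
  exact: between_halfspaces_threshold (hemispaceC hemiP) lines_crossC
    _ _ _ lt_pq nnP_sp nPsq.
- by move: nPsq; rewrite eq_pq.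
Qed.

Lemma lee_fine (R : realDomainType) (e : \bar R) :
  e != +oo%E -> (e <= (fine e)%:E)%E.
Proof. by case: e => [r||] // _; rewrite leNye. Qed.

Section GeneralizedAffine.
Variables (R : realType) (n : nat).
Implicit Types (A : set 'rV[R]_n) (h : 'rV[R]_n -> \bar R) (a x y : 'rV[R]_n).
Implicit Types (S : set ('rV[R]_n * R)).

Lemma convex_setT : convex_set [set: 'rV[R]_n].
Proof. by []. Qed.

Lemma convex_set_prodN S :
  convex_set_prod S -> convex_set_prod [set p | S (p.1, - p.2)].
Proof.
move=> cS p q Sp Sq t t01 /=; rewrite opprD -!mulrN.
exact: (cS (p.1, - p.2) (q.1, - q.2) Sp Sq t t01).
Qed.

Lemma convex_set_prodNE S :
  convex_set_prod [set p | S (p.1, - p.2)] <-> convex_set_prod S.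
Proof.
split=> [cSN|]; last exact: convex_set_prodN.
have SE : [set p | [set p | S (p.1, - p.2)] (p.1, - p.2)] = S.
  by apply/seteqP; split => -[x r]; rewrite /= opprK.
by rewrite -SE; apply: convex_set_prodN.
Qed.

Lemma convex_fun_onN A h :
  convex_fun_on A (fun x => - h x)%E <-> concave_fun_on A h.
Proof.
rewrite /convex_fun_on /concave_fun_on.
have -> : epi A (fun x => - h x)%E = [set p | hypo A h (p.1, - p.2)].
  by apply/seteqP; split => -[x r]; rewrite /epi /hypo /= EFinN leeNl.
exact: convex_set_prodNE.
Qed.

Lemma concave_fun_onN A h :
  concave_fun_on A (fun x => - h x)%E <-> convex_fun_on A h.
Proof.
rewrite /convex_fun_on /concave_fun_on.
have -> : hypo A (fun x => - h x)%E = [set p | epi A h (p.1, - p.2)].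
  by apply/seteqP; split => -[x r]; rewrite /epi /hypo /= EFinN leeNr.
exact: convex_set_prodNE.
Qed.

Lemma gen_affine_onN A h :
  gen_affine_on A (fun x => - h x)%E <-> gen_affine_on A h.
Proof.
rewrite /gen_affine_on; split=> -[cvx ccv].
  by split; [apply/concave_fun_onN | apply/convex_fun_onN].
by split; [apply/convex_fun_onN | apply/concave_fun_onN].
Qed.

Lemma gen_affine_on_sub A h :
  gen_affine_on setT h -> convex_set A -> gen_affine_on A h.
Proof.
move=> [cvx ccv] cA; split=> p q [Ap hp] [Aq hq] t t01; (split; first exact: cA).
- by have [] := cvx p q (conj I hp) (conj I hq) t t01.
- by have [] := ccv p q (conj I hp) (conj I hq) t t01.
Qed.

Section Combinations.
Variable h : 'rV[R]_n -> \bar R.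
Hypothesis G : gen_affine_on setT h.

Lemma gen_affine_le_comb x y r1 r2 t : 0 <= t <= 1 ->
  (h x <= r1%:E)%E -> (h y <= r2%:E)%E ->
  (h ((1 - t) *: x + t *: y) <= ((1 - t) * r1 + t * r2)%:E)%E.
Proof.
by move=> t01 hx hy; have [] := G.1 (x, r1) (y, r2) (conj I hx) (conj I hy) t t01.
Qed.

Lemma gen_affine_ge_comb x y r1 r2 t : 0 <= t <= 1 ->
  (r1%:E <= h x)%E -> (r2%:E <= h y)%E ->
  (((1 - t) * r1 + t * r2)%:E <= h ((1 - t) *: x + t *: y))%E.
Proof.
by move=> t01 hx hy; have [] := G.2 (x, r1) (y, r2) (conj I hx) (conj I hy) t t01.
Qed.

Lemma hemispace_pinfty : hemispace [set x | h x = +oo%E].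
Proof.
split=> x y t t01 /=.
- move=> hx hy; apply: eq_infty => r; have := @gen_affine_ge_comb x y r r t t01.
  by rewrite hx hy leey -mulrDl subrK mul1r; apply.
- move=> /eqP hx /eqP hy hz.
  by have := gen_affine_le_comb t01 (lee_fine hx) (lee_fine hy); rewrite hz leye_eq.
Qed.

Lemma gen_affine_ninfty_comb w u t : 0 <= t < 1 ->
  h w = -oo%E -> h u != +oo%E -> h ((1 - t) *: w + t *: u) = -oo%E.
Proof.
move=> /andP[t0 t1] hw hu; apply: eq_ninfty => r.
have t01 : 0 <= t <= 1 by rewrite t0 ltW.
have := @gen_affine_le_comb w u ((r - t * fine (h u)) / (1 - t)) (fine (h u)) t t01.
rewrite hw leNye => /(_ isT (lee_fine hu)).
suff -> : (1 - t) * ((r - t * fine (h u)) / (1 - t)) + t * fine (h u) = r by [].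
by field; rewrite subr_eq0 gt_eqF.
Qed.

End Combinations.

Lemma gen_affine_pinfty_comb h w u t : gen_affine_on setT h -> 0 <= t < 1 ->
  h w = +oo%E -> h u != -oo%E -> h ((1 - t) *: w + t *: u) = +oo%E.
Proof.
move=> /gen_affine_onN G t01 hw hu.
have hw' : (- h w = -oo)%E by rewrite hw.
have hu' : (- h u != +oo)%E by rewrite eqe_oppLR.
have := gen_affine_ninfty_comb G t01 hw' hu'.
by move/eqP; rewrite eqe_oppLR => /eqP.
Qed.

Lemma gen_affine_reflect h x y : gen_affine_on setT h ->
  h x \is a fin_num -> h y = +oo%E -> h (2 *: x - y) = -oo%E.
Proof.
move=> G hx hy; apply/eqP/contraT => hu.
have half01 : 0 <= (2^-1 : R) < 1.
  by rewrite invr_ge0 ler0n invf_lt1 ?ltr0n ?ltr1n.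
have := gen_affine_pinfty_comb G half01 hy hu.
have -> : (1 - 2^-1) *: y + 2^-1 *: (2 *: x - y) = x.
  by apply/rowP => i; rewrite !mxE; field.
by move=> hxE; rewrite hxE in hx.
Qed.

Lemma gen_affine_ninfty_exists h x y : gen_affine_on setT h ->
  h y = +oo%E -> h x != +oo%E -> exists w, h w = -oo%E.
Proof.
move=> G hy hx; have [hxN|hxN] := eqVneq (h x) -oo%E; first by exists x.
by exists (2 *: x - y); apply: gen_affine_reflect; rewrite ?fin_numE ?hxN.
Qed.

Lemma gen_affine_pinfty_ninfty h x0 x1 x2 : gen_affine_on setT h ->
  h x0 \isn't a fin_num -> h x1 != +oo%E -> h x2 != -oo%E ->
  (exists y, h y = +oo%E) /\ (exists w, h w = -oo%E).
Proof.
move=> G; rewrite fin_numEn => /orP[/eqP hx0|/eqP hx0] hx1 hx2; last first.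
  by split; [exists x0 | exact: gen_affine_ninfty_exists G hx0 hx1].
split; last by exists x0.
have hx0' : (- h x0 = +oo)%E by rewrite hx0.
have hx2' : (- h x2 != +oo)%E by rewrite eqe_oppLR.
have [w /eqP] :=
  gen_affine_ninfty_exists (proj2 (gen_affine_onN _ _) G) hx0' hx2'.
by rewrite eqe_oppLR => /eqP; exists w.
Qed.

Lemma gen_affine_fin_num_dotv h : gen_affine_on setT h ->
  (forall x, h x \is a fin_num) -> exists a b, forall x, h x = (dotv a x + b)%:E.
Proof.
move=> G hfin; pose g x := fine (h x).
have hE x : h x = (g x)%:E by rewrite fineK.
have g_aff : affine_on_segments g.
  move=> x y t t01; apply/eqP; rewrite eq_le -!lee_fin -!hE.
  by rewrite gen_affine_le_comb ?gen_affine_ge_comb -?hE.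
have [a gE] := affine_on_segments_dotv g_aff.
by exists a, (g 0) => x; rewrite hE gE.
Qed.

Lemma gen_affine_ninfty_below h a b y : gen_affine_on setT h -> h y = +oo%E ->
  (forall x, dotv a x < b -> h x != +oo%E) ->
  forall x, dotv a x < b -> h x = -oo%E.
Proof.
move=> G hy below x ax; apply/eqP/contraT => hxN.
have hx : h x \is a fin_num by rewrite fin_numE hxN below.
have [mu /andP[mu_gt0 _] av] := conv_lt_small_weight (dotv a y) ax.
set v := (1 - mu) *: x + mu *: y.
have hv : h v != +oo%E by apply: below; rewrite dotv_combr.
have mu1_gt0 : 0 < 1 + mu by rewrite addr_gt0.
have la01 : 0 <= (1 + mu)^-1 < 1.
  by rewrite invr_ge0 (ltW mu1_gt0) invf_lt1 // ltrDl.
(* x lies strictly inside the segment from the -oo point 2x - y to v *)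
have := gen_affine_ninfty_comb G la01 (gen_affine_reflect G hx hy) hv.
have -> : (1 - (1 + mu)^-1) *: (2 *: x - y) + (1 + mu)^-1 *: v = x.
  by apply/rowP => i; rewrite !mxE; field; rewrite gt_eqF.
by move/eqP; rewrite (negPf hxN).
Qed.

Lemma gen_affine_split_halfspaces h : gen_affine_on setT h ->
  (exists y, h y = +oo%E) -> (exists w, h w = -oo%E) ->
  exists a b, a != 0 /\
    (forall x, dotv a x > b -> h x = +oo%E) /\
    (forall x, dotv a x < b -> h x = -oo%E) /\
    gen_affine_on (hyperplane a b) h.
Proof.
move=> G [y hy] [w hw].
have pinfty_ne : [set x | h x = +oo%E] !=set0 by exists y.
have pinftyC_ne : ~` [set x | h x = +oo%E] !=set0 by exists w; rewrite /= hw.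
have [a [b [a0 above below]]] :=
  hemispace_between_halfspaces (hemispace_pinfty G) pinfty_ne pinftyC_ne.
exists a, b; split=> //; split=> //; split.
  by apply: gen_affine_ninfty_below G hy _ => x /below /eqP.
apply: gen_affine_on_sub G _; exact: convex_hyperplane.
Qed.

Lemma gen_affine_on_pinfty A h :
  convex_set A -> (forall x, h x = +oo%E) -> gen_affine_on A h.
Proof.
move=> cA hE; split=> p q [Ap hp] [Aq hq] t t01.
- by move: hp; rewrite hE leye_eq.
- by split; [exact: cA | rewrite hE leey].
Qed.

Lemma gen_affine_on_ninfty A h :
  convex_set A -> (forall x, h x = -oo%E) -> gen_affine_on A h.
Proof.
by move=> cA hE; apply/gen_affine_onN/gen_affine_on_pinfty => // x; rewrite hE.
Qed.

Lemma gen_affine_on_dotv A a b :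
  convex_set A -> gen_affine_on A (fun x => (dotv a x + b)%:E).
Proof.
move=> cA; split=> p q [Ap hp] [Aq hq] t t01; (split; first exact: cA);
  have [t0 t1] := andP t01; move: hp hq; rewrite /= !lee_fin dotv_combr; nra.
Qed.

Lemma convex_fun_on_split_halfspaces h a b :
  (forall x, b < dotv a x -> h x = +oo%E) ->
  (forall x, dotv a x < b -> h x = -oo%E) ->
  convex_fun_on (hyperplane a b) h -> convex_fun_on setT h.
Proof.
move=> above below cvx [x r1] [y r2] [_ hx] [_ hy] t t01; split=> //=.
have ax : dotv a x <= b.
  by rewrite leNgt; apply/negP => /above hxE; rewrite hxE leye_eq in hx.
have ay : dotv a y <= b.
  by rewrite leNgt; apply/negP => /above hyE; rewrite hyE leye_eq in hy.
have [az|] := ltP (dotv a ((1 - t) *: x + t *: y)) b.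
  by rewrite below ?leNye.
have [->|t_neq0] := eqVneq t 0.
  by rewrite subr0 scale1r scale0r addr0 mul1r mul0r addr0.
have [->|t_neq1] := eqVneq t 1.
  by rewrite subrr scale0r add0r scale1r mul0r add0r mul1r.
have [t0 t1] := andP t01.
have t_gt0 : 0 < t by rewrite lt_neqAle eq_sym t_neq0.
have t_lt1 : t < 1 by rewrite lt_neqAle t_neq1.
rewrite dotv_combr => bz.
have xH : dotv a x = b by apply/eqP; rewrite eq_le ax /=; nra.
have yH : dotv a y = b by apply/eqP; rewrite eq_le ay /=; nra.
by have [] := cvx (x, r1) (y, r2) (conj xH hx) (conj yH hy) t t01.
Qed.

Lemma gen_affine_on_split_halfspaces h a b :
  (forall x, b < dotv a x -> h x = +oo%E) ->
  (forall x, dotv a x < b -> h x = -oo%E) ->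
  gen_affine_on (hyperplane a b) h -> gen_affine_on setT h.
Proof.
move=> above below [cvx ccv]; split.
  exact: convex_fun_on_split_halfspaces above below cvx.
apply/convex_fun_onN/(@convex_fun_on_split_halfspaces _ (- a) (- b)).
- by move=> x; rewrite dotvNl ltrN2 => /below ->.
- by move=> x; rewrite dotvNl ltrN2 => /above ->.
- by rewrite hyperplaneN; apply/convex_fun_onN.
Qed.

End GeneralizedAffine.

Theorem theorem1 (R : realType) (n : nat) (h : 'rV[R]_n -> \bar R) :
  gen_affine_on setT h <->
  [\/ (forall x, h x = +oo%E),
      (forall x, h x = -oo%E),
      (exists (a : 'rV[R]_n) (b : R), forall x, h x = (dotv a x + b)%:E)
    | (exists (a : 'rV[R]_n) (b : R),
         a != 0 /\
         (forall x, dotv a x > b -> h x = +oo%E) /\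
         (forall x, dotv a x < b -> h x = -oo%E) /\
         gen_affine_on (hyperplane a b) h)].
Proof.
split=> [G|].
  have [?|/existsNP[x1 /eqP hx1]] := EM (forall x, h x = +oo%E); first exact: Or41.
  have [?|/existsNP[x2 /eqP hx2]] := EM (forall x, h x = -oo%E); first exact: Or42.
  have [hfin|/existsNP[x0 /negP hx0]] := EM (forall x, h x \is a fin_num).
    by apply: Or43; apply: gen_affine_fin_num_dotv.
  have [pinfty ninfty] := gen_affine_pinfty_ninfty G hx0 hx1 hx2.
  by apply: Or44; apply: gen_affine_split_halfspaces.
case=> [pinfty|ninfty|[a [b hE]]|[a [b [_ [above [below Hh]]]]]].
- exact: gen_affine_on_pinfty (@convex_setT R n) pinfty.
- exact: gen_affine_on_ninfty (@convex_setT R n) ninfty.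
- by rewrite (funext hE); apply: gen_affine_on_dotv (@convex_setT R n).
- exact: gen_affine_on_split_halfspaces above below Hh.
Qed.
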